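(* Let $A$ be a ring with a nilpotent two-sided ideal $\mathfrak{a}$ such that the ring $\operatorname{gr}_{\mathfrak{a}}A = \bigoplus_{i\ge0}\mathfrak{a}^i/\mathfrak{a}^{i+1}$ is commutative, and let $s\in A$. (1) The set $\{s^j\}_{j\ge0}$ is a denominator set in $A$; let $A_s$ be the resulting ring of fractions. (2) Let $\bar A := A/\mathfrak{a}$, $\bar s$ the image of $s$ in $\bar A$, and $\mathfrak{a}_s$ the kernel of the canonical surjection $A_s\to\bar A_{\bar s}$. Then $\mathfrak{a}_s = \mathfrak{a}A_s = A_s\mathfrak{a}$, and this ideal is nilpotent. (3) An element $a\in A$ is invertible in $A_s$ if and only if its image $\bar a$ is invertible in $\bar A_{\bar s}$.
   Context: Rings are associative and unital. A subset $S$ of a ring $A$ is a denominator set if it is multiplicatively closed and satisfies the left and right Ore conditions and the left and right torsion (reversibility) conditions; then the ring of fractions $A_S$ exists: a ring homomorphism $A\to A_S$ universal for inverting $S$, every element of which has the form $a_1s_1^{-1}=s_2^{-1}a_2$ with $a_i\in A$, $s_i\in S$. *)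

From HB Require Import structures.
From mathcomp Require Import all_boot all_order all_algebra.
Set Implicit Arguments. Unset Strict Implicit. Unset Printing Implicit Defensive.
Import GRing.Theory.
Local Open Scope ring_scope.

(* Rings are associative and unital; the zero ring is allowed (pzRingType),
   since e.g. A_s = 0 when s is nilpotent. Subsets are Prop-valued predicates. *)

Definition two_sided_ideal (A : pzRingType) (I : A -> Prop) : Prop :=
  [/\ I 0, (forall x y, I x -> I y -> I (x + y)), (forall x, I x -> I (- x)),
      (forall a x, I x -> I (a * x)) & (forall a x, I x -> I (x * a))].

(* x belongs to I^n, the two-sided ideal generated by all products
   x_1 * ... * x_n with x_j in I (for n = 0 this is the whole ring). *)
Definition ideal_pow (A : pzRingType) (I : A -> Prop) (n : nat) (x : A) : Prop :=
  exists (k : nat) (b c : 'I_k -> A) (f : 'I_k -> 'I_n -> A),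
    (forall i j, I (f i j)) /\
    x = \sum_(i < k) (b i * (\prod_(j < n) f i j) * c i).

Definition ideal_nilpotent (A : pzRingType) (I : A -> Prop) : Prop :=
  exists n : nat, forall x, ideal_pow I n x -> x = 0.

(* gr_I A = (+)_i I^i / I^(i+1) is commutative: the product of homogeneous
   classes [x]_i [y]_j = [x y]_(i+j) is commutative, i.e.
   x y - y x lies in I^(i+j+1) whenever x in I^i and y in I^j. *)
Definition gr_commutative (A : pzRingType) (I : A -> Prop) : Prop :=
  forall (i j : nat) (x y : A), ideal_pow I i x -> ideal_pow I j y ->
    ideal_pow I (i + j).+1 (x * y - y * x).

Definition powers (A : pzRingType) (s : A) : A -> Prop :=
  fun x => exists j : nat, x = s ^+ j.

Definition is_denominator_set (A : pzRingType) (S : A -> Prop) : Prop :=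
  [/\ (S 1 /\ forall x y, S x -> S y -> S (x * y)),
      (forall (a t : A), S t -> exists (b u : A), S u /\ a * u = t * b),
      (forall (a t : A), S t -> exists (b u : A), S u /\ u * a = b * t),
      (forall (a t : A), S t -> t * a = 0 -> exists u, S u /\ a * u = 0)
    & (forall (a t : A), S t -> a * t = 0 -> exists u, S u /\ u * a = 0)].

Definition invertible (R : pzRingType) (x : R) : Prop :=
  exists y : R, x * y = 1 /\ y * x = 1.

Definition is_ring_of_fractions (A B : pzRingType) (S : A -> Prop)
    (phi : {rmorphism A -> B}) : Prop :=
  (forall t, S t -> invertible (phi t)) /\
  forall (R : pzRingType) (g : {rmorphism A -> R}),
    (forall t, S t -> invertible (g t)) ->
    exists h : {rmorphism B -> R},
      (forall a, h (phi a) = g a) /\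
      (forall h' : {rmorphism B -> R}, (forall a, h' (phi a) = g a) -> forall b, h' b = h b).

Definition ext_right (A B : pzRingType) (I : A -> Prop) (phi : {rmorphism A -> B}) (x : B) : Prop :=
  exists (k : nat) (a : 'I_k -> A) (b : 'I_k -> B),
    (forall i, I (a i)) /\ x = \sum_(i < k) (phi (a i) * b i).

Definition ext_left (A B : pzRingType) (I : A -> Prop) (phi : {rmorphism A -> B}) (x : B) : Prop :=
  exists (k : nat) (a : 'I_k -> A) (b : 'I_k -> B),
    (forall i, I (a i)) /\ x = \sum_(i < k) (b i * phi (a i)).

From HB Require Import structures.
From mathcomp Require Import all_boot all_order all_algebra.
From mathcomp Require Import boolp.
Set Implicit Arguments. Unset Strict Implicit. Unset Printing Implicit Defensive.
Import GRing.Theory.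
Local Open Scope ring_scope.

(* Commutativity of gr_a A says [x, y] lies in a^(i+j+1) for x in a^i and y in
   a^j; hence ad s = [s, -] maps a^i into a^(i+1), and ad s is nilpotent once a is.
   A (locally) nilpotent ad s lets powers of s be pushed past any element, which
   yields the Ore and torsion conditions for the powers of s, shows that every
   fraction can be written phi(a) u^j and u^j phi(a') with u = phi(s)^-1, and
   that pushing u past phi(a) keeps a inside the ideal a.  So a A_s = A_s a is a
   two-sided ideal, killed by A_s -> Abar_s; conversely A_s / a A_s inverts s and
   kills a, so the universal property of Abar_s maps Abar_s to it and the kernel
   is exactly a A_s.  A product of N elements of a A_s lies in phi(a^N) A_s = 0,
   and units lift along a surjection with nil kernel, which gives (3). *)

Section TwoSidedIdeal.
Variables (R : pzRingType) (J : R -> Prop).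
Hypothesis hJ : two_sided_ideal J.

Lemma two_sided_ideal0 : J 0.
Proof. by case: hJ. Qed.
Lemma two_sided_idealD x y : J x -> J y -> J (x + y).
Proof. by case: hJ => _ + _ _ _; apply. Qed.
Lemma two_sided_idealN x : J x -> J (- x).
Proof. by case: hJ => _ _ + _ _; apply. Qed.
Lemma two_sided_idealMl a x : J x -> J (a * x).
Proof. by case: hJ => _ _ _ + _; apply. Qed.
Lemma two_sided_idealMr a x : J x -> J (x * a).
Proof. by case: hJ => _ _ _ _; apply. Qed.
Lemma two_sided_idealB x y : J x -> J y -> J (x - y).
Proof. by move=> Jx /two_sided_idealN; apply: two_sided_idealD. Qed.

End TwoSidedIdeal.

Lemma two_sided_idealT (R : pzRingType) : two_sided_ideal (fun _ : R => True).
Proof. by []. Qed.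

Section QuotientRing.
Local Open Scope quotient_scope.
Variables (R : pzRingType) (J : R -> Prop).
Hypothesis hJ : two_sided_ideal J.

Definition idealb : pred R := fun x => `[< J x >].
Lemma idealb_zmod_closed : zmod_closed idealb.
Proof.
split=> [|x y /asboolP Jx /asboolP Jy]; apply/asboolP; first exact: (two_sided_ideal0 hJ).
exact: (two_sided_idealB hJ).
Qed.
HB.instance Definition _ := GRing.isZmodClosed.Build R idealb idealb_zmod_closed.

Definition quot_ring := Quotient.quot (GRing.ZmodClosed.clone R idealb _).
HB.instance Definition _ := GRing.Zmodule.on quot_ring.

Lemma quot_eqP x y : \pi_quot_ring x = \pi_quot_ring y <-> J (x - y).
Proof.
rewrite -[J _]asboolE -[`[< _ >]]/(x - y \in idealb) Quotient.idealrBE.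
by split=> /eqP.
Qed.

Definition quot_one : quot_ring := lift_cst quot_ring 1.
Definition quot_mul := lift_op2 quot_ring *%R.
Canonical pi_quot_one := PiConst quot_one.

Lemma pi_quot_mul : {morph \pi_quot_ring : x y / x * y >-> quot_mul x y}.
Proof.
move=> x y; unlock quot_mul; apply/esym/quot_eqP.
set x' := repr _; set y' := repr _.
have -> : x' * y' - x * y = (x' - x) * y' + x * (y' - y).
  by rewrite mulrBl mulrBr addrA subrK.
apply: (two_sided_idealD hJ).
  by apply: (two_sided_idealMr hJ); rewrite -quot_eqP reprK.
by apply: (two_sided_idealMl hJ); rewrite -quot_eqP reprK.
Qed.
Canonical pi_quot_mul_morph := PiMorph2 pi_quot_mul.

Lemma quot_mulA : associative quot_mul.
Proof. by move=> x y z; rewrite -[x]reprK -[y]reprK -[z]reprK !piE mulrA. Qed.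
Lemma quot_mul1 : left_id quot_one quot_mul.
Proof. by move=> x; rewrite -[x]reprK !piE mul1r. Qed.
Lemma quot_mulr1 : right_id quot_one quot_mul.
Proof. by move=> x; rewrite -[x]reprK !piE mulr1. Qed.
Lemma quot_mulDl : left_distributive quot_mul +%R.
Proof. by move=> x y z; rewrite -[x]reprK -[y]reprK -[z]reprK !piE mulrDl. Qed.
Lemma quot_mulDr : right_distributive quot_mul +%R.
Proof. by move=> x y z; rewrite -[x]reprK -[y]reprK -[z]reprK !piE mulrDr. Qed.
HB.instance Definition _ := GRing.Zmodule_isPzRing.Build quot_ring
  quot_mulA quot_mul1 quot_mulr1 quot_mulDl quot_mulDr.

Definition quot_proj (x : R) : quot_ring := \pi x.
Lemma quot_proj_is_zmod_morphism : zmod_morphism quot_proj.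
Proof. by move=> x y; rewrite /quot_proj !piE. Qed.
Lemma quot_proj_is_monoid_morphism : monoid_morphism quot_proj.
Proof. by split=> [|x y]; rewrite /quot_proj !piE. Qed.
HB.instance Definition _ := GRing.isZmodMorphism.Build R quot_ring quot_proj
  quot_proj_is_zmod_morphism.
HB.instance Definition _ := GRing.isMonoidMorphism.Build R quot_ring quot_proj
  quot_proj_is_monoid_morphism.

Lemma quot_proj_eq0 x : quot_proj x = 0 <-> J x.
Proof. by rewrite -(rmorph0 quot_proj) quot_eqP subr0. Qed.
Lemma quot_proj_surj z : exists x, quot_proj x = z.
Proof. by exists (repr z); rewrite /quot_proj reprK. Qed.

End QuotientRing.

Section SubringOfFractions.
Variables (A B : pzRingType) (S : A -> Prop) (phi : {rmorphism A -> B}).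
Hypothesis hphi : is_ring_of_fractions S phi.
Variable P : B -> Prop.
Hypotheses (P1 : P 1) (PB : forall x y, P x -> P y -> P (x - y))
  (PM : forall x y, P x -> P y -> P (x * y)) (Pphi : forall a, P (phi a))
  (Pinv : forall t, S t -> exists y, [/\ P y, phi t * y = 1 & y * phi t = 1]).

Definition subringb : pred B := fun x => `[< P x >].
Lemma subringb_closed : subring_closed subringb.
Proof.
split=> [|x y /asboolP Px /asboolP Py|x y /asboolP Px /asboolP Py]; apply/asboolP.
- exact: P1.
- exact: PB.
- exact: PM.
Qed.
Definition subring_type := {x : B | subringb x}.
HB.instance Definition _ := [isSub for (@proj1_sig B subringb) : subring_type -> B].
HB.instance Definition _ := [Choice of subring_type by <:].
HB.instance Definition _ :=
  GRing.SubChoice_isSubPzRing.Build B subringb subring_type subringb_closed.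

Definition phi_sub (a : A) : subring_type := Sub (phi a) (asboolT (Pphi a)).
Lemma phi_sub_is_zmod_morphism : zmod_morphism phi_sub.
Proof. by move=> x y; apply: val_inj; rewrite /= rmorphB. Qed.
Lemma phi_sub_is_monoid_morphism : monoid_morphism phi_sub.
Proof. by split=> [|x y]; apply: val_inj; rewrite /= (rmorph1, rmorphM). Qed.
HB.instance Definition _ := GRing.isZmodMorphism.Build A subring_type phi_sub
  phi_sub_is_zmod_morphism.
HB.instance Definition _ := GRing.isMonoidMorphism.Build A subring_type phi_sub
  phi_sub_is_monoid_morphism.

(* The uniqueness part of the universal property forces the inclusion of the
   subring to be surjective. *)
Lemma ring_of_fractions_subring b : P b.
Proof.
have [phi_inv phi_univ] := hphi.
have [|h [hphi_sub _]] := phi_univ _ phi_sub.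
  move=> t /Pinv [y [Py ty yt]].
  by exists (Sub y (asboolT Py)); split; apply: val_inj.
have [h0 [_ h0_uniq]] := phi_univ B phi phi_inv.
have h0_id : idfun b = h0 b by apply: h0_uniq.
have h0_val : (val \o h) b = h0 b by apply: h0_uniq => a /=; rewrite hphi_sub.
rewrite [b]h0_id -h0_val; exact/asboolP/(valP (h b)).
Qed.

End SubringOfFractions.

Section FactorThroughSurjection.
Variables (A Abar R : pzRingType) (pi : {rmorphism A -> Abar}) (k : {rmorphism A -> R}).
Hypotheses (pi_surj : forall y, exists a, pi a = y)
  (ker_pi_sub : forall a, pi a = 0 -> k a = 0).

Definition factor (y : Abar) : R := k (projT1 (cid (pi_surj y))).

Lemma factorE a : factor (pi a) = k a.
Proof.
rewrite /factor; case: cid => a' pi_a'; apply/eqP; rewrite -subr_eq0 -rmorphB.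
by rewrite ker_pi_sub // rmorphB pi_a' subrr.
Qed.

Lemma factor_is_zmod_morphism : zmod_morphism factor.
Proof.
move=> x y; have [[a <-] [b <-]] := (pi_surj x, pi_surj y).
by rewrite -rmorphB !factorE rmorphB.
Qed.
Lemma factor_is_monoid_morphism : monoid_morphism factor.
Proof.
split=> [|x y]; first by rewrite -(rmorph1 pi) factorE rmorph1.
by have [[a <-] [b <-]] := (pi_surj x, pi_surj y); rewrite -rmorphM !factorE rmorphM.
Qed.
HB.instance Definition _ := GRing.isZmodMorphism.Build Abar R factor
  factor_is_zmod_morphism.
HB.instance Definition _ := GRing.isMonoidMorphism.Build Abar R factor
  factor_is_monoid_morphism.

Lemma factor_through_surjection :
  exists g : {rmorphism Abar -> R}, forall a, g (pi a) = k a.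
Proof. by exists factor; apply: factorE. Qed.

End FactorThroughSurjection.

Section Invertible.
Variable R : pzRingType.
Implicit Types x y z : R.

Lemma invertible_lr x y z : x * y = 1 -> z * x = 1 -> invertible x.
Proof.
move=> xy zx; exists y; split=> //.
by have <- : z = y by rewrite -[z]mulr1 -xy mulrA zx mul1r.
Qed.

Lemma invertible1B_nilpotent z n : z ^+ n = 0 -> invertible (1 - z).
Proof.
move=> zn; apply: (@invertible_lr _ (\sum_(i < n) z ^+ i) (\sum_(i < n) z ^+ i)).
  by rewrite -opprB mulNr -subrX1 zn sub0r opprK.
have /commr_sym -> : GRing.comm (1 - z) (\sum_(i < n) z ^+ i).
  apply: commr_sum => i _; apply/commr_sym/commrB; first exact: commr1.
  exact/commr_sym/commrX.
by rewrite -opprB mulNr -subrX1 zn sub0r opprK.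
Qed.

End Invertible.

Lemma invertible_rmorph (R S : pzRingType) (g : {rmorphism R -> S}) x :
  invertible x -> invertible (g x).
Proof. by case=> y [xy yx]; exists (g y); rewrite -!rmorphM xy yx rmorph1. Qed.

Lemma invertible_lift (B Q : pzRingType) (q : {rmorphism B -> Q}) :
  (forall z, exists x, q x = z) -> (forall x, q x = 0 -> exists n, x ^+ n = 0) ->
  forall x, invertible (q x) -> invertible x.
Proof.
move=> q_surj q_nil x [w [xw wx]]; have [y qy] := q_surj w.
have nil1B z : q z = 1 -> invertible z.
  move=> qz; have [n /invertible1B_nilpotent] : exists n, (1 - z) ^+ n = 0.
    by apply: q_nil; rewrite rmorphB rmorph1 qz subrr.
  by rewrite opprB addrC subrK.
have [v [xyv _]] : invertible (x * y) by apply: nil1B; rewrite rmorphM qy.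
have [v' [_ v'yx]] : invertible (y * x) by apply: nil1B; rewrite rmorphM qy.
by apply: (invertible_lr (y := y * v) (z := v' * y)); [rewrite mulrA | rewrite -mulrA].
Qed.

Definition ad (A : pzRingType) (s y : A) : A := s * y - y * s.

Section LocallyNilpotentAd.
Variables (A : pzRingType) (s : A).
Local Notation ad := (ad s).

Lemma ad_mulr y : y * s = s * y - ad y.
Proof. by rewrite /ad opprB addrC subrK. Qed.
Lemma ad_mull y : s * y = y * s + ad y.
Proof. by rewrite /ad addrC subrK. Qed.

Section OreIdeal.
Variable Q : A -> Prop.
Hypothesis hQ : two_sided_ideal Q.

Lemma ad_ideal y : Q y -> Q (ad y).
Proof.
move=> Qy; apply: (two_sided_idealB hQ); first exact: (two_sided_idealMl hQ).
exact: (two_sided_idealMr hQ).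
Qed.

Lemma ore_right_ideal n y : iter n ad y = 0 -> Q y ->
  forall j, exists m b, Q b /\ y * s ^+ m = s ^+ j * b.
Proof.
elim: n y => [|n IHn] y; rewrite ?iterSr => ady Qy j.
  by exists 0%N, 0; rewrite [y]ady mul0r mulr0; split; first exact: (two_sided_ideal0 hQ).
elim: j => [|j [m1 [b1 [Qb1 yb1]]]]; first by exists 0%N, y; rewrite mulr1 mul1r.
have [m2 [b2 [Qb2 adb2]]] := IHn (ad y) ady (ad_ideal Qy) j.+1.
exists (m1 + m2)%N.+1, (b1 * s ^+ m2 - b2 * s ^+ m1); split.
  by apply: (two_sided_idealB hQ); apply: (two_sided_idealMr hQ).
(* y s^(1 + m1 + m2) = s (y s^m1) s^m2 - (ad y s^m2) s^m1 *)
rewrite exprS mulrA ad_mulr mulrBl exprD -!mulrA (mulrA y) yb1 mulrBr.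
by rewrite -exprD addnC exprD (mulrA (ad y)) adb2 !mulrA -exprS.
Qed.

Lemma ore_left_ideal n y : iter n ad y = 0 -> Q y ->
  forall j, exists m b, Q b /\ s ^+ m * y = b * s ^+ j.
Proof.
elim: n y => [|n IHn] y; rewrite ?iterSr => ady Qy j.
  by exists 0%N, 0; rewrite [y]ady mul0r mulr0; split; first exact: (two_sided_ideal0 hQ).
elim: j => [|j [m1 [b1 [Qb1 yb1]]]]; first by exists 0%N, y; rewrite mulr1 mul1r.
have [m2 [b2 [Qb2 adb2]]] := IHn (ad y) ady (ad_ideal Qy) j.+1.
exists (m1 + m2)%N.+1, (s ^+ m2 * b1 + s ^+ m1 * b2); split.
  by apply: (two_sided_idealD hQ); apply: (two_sided_idealMl hQ).
rewrite exprSr -mulrA ad_mull mulrDr addnC exprD !mulrA -(mulrA _ _ y) yb1.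
rewrite -exprD addnC exprD -(mulrA (s ^+ m1)) adb2 mulrDl !mulrA.
by rewrite -(mulrA _ (s ^+ j)) -exprSr.
Qed.

End OreIdeal.

Lemma torsion_right n y : iter n ad y = 0 ->
  forall j, s ^+ j * y = 0 -> exists m, y * s ^+ m = 0.
Proof.
elim: n y => [|n IHn] y; rewrite ?iterSr => ady j sy.
  by exists 0%N; rewrite [y]ady mul0r.
have [m adm] : exists m, ad y * s ^+ m = 0.
  apply: (IHn _ ady j); rewrite /ad mulrBr !mulrA -exprSr exprS -mulrA sy.
  by rewrite mulr0 mul0r subrr.
exists (m + j)%N.
suff -> : forall k, y * s ^+ (m + k) = s ^+ k * y * s ^+ m.
  by rewrite sy mul0r.
elim=> [|k IHk]; first by rewrite addn0 mul1r.
rewrite addnS exprS mulrA ad_mulr mulrBl -mulrA IHk exprD mulrA (mulrA (ad y)) adm.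
by rewrite mul0r subr0 !mulrA -exprS.
Qed.

Lemma torsion_left n y : iter n ad y = 0 ->
  forall j, y * s ^+ j = 0 -> exists m, s ^+ m * y = 0.
Proof.
elim: n y => [|n IHn] y; rewrite ?iterSr => ady j ys.
  by exists 0%N; rewrite [y]ady mulr0.
have [m adm] : exists m, s ^+ m * ad y = 0.
  apply: (IHn _ ady j); rewrite /ad mulrBl -!mulrA ys -exprS exprSr mulrA ys.
  by rewrite mul0r mulr0 subrr.
exists (j + m)%N.
suff -> : forall k, s ^+ (k + m) * y = s ^+ m * y * s ^+ k.
  by rewrite -mulrA ys mulr0.
elim=> [|k IHk]; first by rewrite add0n mulr1.
rewrite addSn exprSr -mulrA ad_mull mulrDr mulrA IHk exprD -(mulrA (s ^+ k)) adm.
by rewrite mulr0 addr0 -!mulrA -exprSr.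
Qed.

Lemma powers_denominator_set :
  (forall y, exists n, iter n ad y = 0) -> is_denominator_set (powers s).
Proof.
move=> adnil; have hT := @two_sided_idealT A.
split.
- split=> [|_ _ [j ->] [k ->]]; first by exists 0%N.
  by exists (j + k)%N; rewrite exprD.
- move=> a _ [j ->]; have [n /ore_right_ideal] := adnil a.
  by case/(_ _ hT Logic.I j) => m [b [_ ab]]; exists b, (s ^+ m); split=> //; exists m.
- move=> a _ [j ->]; have [n /ore_left_ideal] := adnil a.
  by case/(_ _ hT Logic.I j) => m [b [_ ab]]; exists b, (s ^+ m); split=> //; exists m.
- move=> a _ [j ->] sa; have [n /torsion_right] := adnil a.
  by case/(_ j sa) => m am; exists (s ^+ m); split=> //; exists m.
- move=> a _ [j ->] ys; have [n /torsion_left] := adnil a.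
  by case/(_ j ys) => m am; exists (s ^+ m); split=> //; exists m.
Qed.

End LocallyNilpotentAd.

Section IdealPow.
Variables (A : pzRingType) (I : A -> Prop).

Lemma ideal_pow0 x : ideal_pow I 0 x.
Proof.
exists 1%N, (fun _ => x), (fun _ => 1), (fun _ _ => 0); split=> [_ []//|].
by rewrite big_ord1 big_ord0 !mulr1.
Qed.

Definition prod_of (n : nat) (a : A) : Prop :=
  exists g : nat -> A, (forall j, I (g j)) /\ a = \prod_(j < n) g j.

Lemma prod_ofM n a y : I a -> prod_of n y -> prod_of n.+1 (a * y).
Proof.
move=> Ia [g [Ig ->]]; exists (fun j => if j is j'.+1 then g j' else a).
by rewrite big_ord_recl; split=> [[]|].
Qed.

Lemma ideal_pow_prod_of n a : prod_of n a -> ideal_pow I n a.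
Proof.
move=> [g [Ig ->]]; exists 1%N, (fun _ => 1), (fun _ => 1), (fun _ j => g j).
by rewrite big_ord1 mul1r mulr1.
Qed.

Lemma ideal_pow_iter_ad s n y :
  gr_commutative I -> ideal_pow I n (iter n (ad s) y).
Proof.
move=> grI; elim: n => [|n IHn]; first exact: ideal_pow0.
exact: (grI 0%N n s _ (ideal_pow0 s) IHn).
Qed.

End IdealPow.

Section FractionsLocallyNilpotentAd.
Variables (A B : pzRingType) (s : A) (phi : {rmorphism A -> B}).
Hypotheses (hphi : is_ring_of_fractions (powers s) phi)
  (adnil : forall y, exists n, iter n (ad s) y = 0).
Variable u : B.
Hypotheses (phisu : phi s * u = 1) (uphis : u * phi s = 1).

Lemma phisX_uX j : phi s ^+ j * u ^+ j = 1.
Proof.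
elim: j => [|j IHj]; first by rewrite mulr1.
by rewrite exprSr exprS mulrA -(mulrA _ (phi s)) phisu mulr1.
Qed.

Lemma uX_phisX j : u ^+ j * phi s ^+ j = 1.
Proof.
elim: j => [|j IHj]; first by rewrite mulr1.
by rewrite exprSr exprS mulrA -(mulrA _ u) uphis mulr1.
Qed.

Section Swap.
Variable Q : A -> Prop.
Hypothesis hQ : two_sided_ideal Q.

Lemma uX_phi_swap j z :
  Q z -> exists z' m, Q z' /\ u ^+ j * phi z = phi z' * u ^+ m.
Proof.
move=> Qz; have [n /ore_right_ideal] := adnil z.
case/(_ _ hQ Qz j) => m [b [Qb zb]]; exists b, m; split=> //.
have -> : u ^+ j * phi z = u ^+ j * phi (z * s ^+ m) * u ^+ m.
  by rewrite rmorphM rmorphXn -!mulrA phisX_uX mulr1.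
by rewrite zb rmorphM rmorphXn !mulrA uX_phisX mul1r.
Qed.

Lemma phi_uX_swap j z :
  Q z -> exists z' m, Q z' /\ phi z * u ^+ j = u ^+ m * phi z'.
Proof.
move=> Qz; have [n /ore_left_ideal] := adnil z.
case/(_ _ hQ Qz j) => m [b [Qb zb]]; exists b, m; split=> //.
have -> : phi z * u ^+ j = u ^+ m * phi (s ^+ m * z) * u ^+ j.
  by rewrite rmorphM rmorphXn !mulrA uX_phisX mul1r.
by rewrite zb rmorphM rmorphXn -!mulrA phisX_uX mulr1.
Qed.

End Swap.

Lemma fraction_right b : exists a j, b = phi a * u ^+ j.
Proof.
have shift a j k : phi a * u ^+ j = phi (a * s ^+ k) * u ^+ (k + j).
  by rewrite rmorphM rmorphXn exprD -mulrA (mulrA (phi s ^+ k)) phisX_uX mul1r.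
apply: (ring_of_fractions_subring hphi (P := fun b => exists a j, b = phi a * u ^+ j)).
- by exists 1, 0%N; rewrite rmorph1 mulr1.
- move=> _ _ [a [j ->]] [c [k ->]]; exists (a * s ^+ k - c * s ^+ j), (k + j)%N.
  by rewrite (shift a j k) (shift c k j) addnC rmorphB mulrBl.
- move=> _ _ [a [j ->]] [c [k ->]].
  have [c' [m [_ uc]]] := uX_phi_swap (@two_sided_idealT A) j (z := c) Logic.I.
  exists (a * c'), (m + k)%N.
  by rewrite -mulrA (mulrA (u ^+ j)) uc rmorphM exprD !mulrA.
- by move=> a; exists a, 0%N; rewrite mulr1.
- move=> _ [j ->]; exists (u ^+ j); rewrite rmorphXn phisX_uX uX_phisX.
  by split=> //; exists 1, j; rewrite rmorph1 mul1r.
Qed.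

Lemma fraction_left b : exists a j, b = u ^+ j * phi a.
Proof.
have shift a j k : u ^+ j * phi a = u ^+ (j + k) * phi (s ^+ k * a).
  by rewrite rmorphM rmorphXn exprD -mulrA (mulrA (u ^+ k)) uX_phisX mul1r.
apply: (ring_of_fractions_subring hphi (P := fun b => exists a j, b = u ^+ j * phi a)).
- by exists 1, 0%N; rewrite rmorph1 mulr1.
- move=> _ _ [a [j ->]] [c [k ->]]; exists (s ^+ k * a - s ^+ j * c), (j + k)%N.
  by rewrite (shift a j k) (shift c k j) addnC rmorphB mulrBr.
- move=> _ _ [a [j ->]] [c [k ->]].
  have [a' [m [_ au]]] := phi_uX_swap (@two_sided_idealT A) k (z := a) Logic.I.
  exists (a' * c), (j + m)%N.
  by rewrite -mulrA (mulrA (phi a)) au rmorphM exprD !mulrA.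
- by move=> a; exists a, 0%N; rewrite mul1r.
- move=> _ [j ->]; exists (u ^+ j); rewrite rmorphXn phisX_uX uX_phisX.
  by split=> //; exists 1, j; rewrite rmorph1 mulr1.
Qed.

Definition ext_rseq (P : A -> Prop) (b : B) : Prop := exists l : seq (A * B),
  (forall p, p \in l -> P p.1) /\ b = \sum_(p <- l) phi p.1 * p.2.
Definition ext_lseq (P : A -> Prop) (b : B) : Prop := exists l : seq (A * B),
  (forall p, p \in l -> P p.1) /\ b = \sum_(p <- l) p.2 * phi p.1.

Section ExtensionClosure.
Variable P : A -> Prop.

Lemma ext_rightE b : ext_right P phi b <-> ext_rseq P b.
Proof.
split=> [[k [a [c [Pa ->]]]] | [l [Pl ->]]].
  exists [seq (a i, c i) | i <- index_enum 'I_k]; rewrite big_map; split=> //.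
  by move=> _ /mapP [i _ ->]; apply: Pa.
exists (size l), (fun i => (nth (0, 0) l i).1), (fun i => (nth (0, 0) l i).2).
by rewrite (big_nth (0, 0)) big_mkord; split=> // i; apply/Pl/mem_nth.
Qed.

Lemma ext_leftE b : ext_left P phi b <-> ext_lseq P b.
Proof.
split=> [[k [a [c [Pa ->]]]] | [l [Pl ->]]].
  exists [seq (a i, c i) | i <- index_enum 'I_k]; rewrite big_map; split=> //.
  by move=> _ /mapP [i _ ->]; apply: Pa.
exists (size l), (fun i => (nth (0, 0) l i).1), (fun i => (nth (0, 0) l i).2).
by rewrite (big_nth (0, 0)) big_mkord; split=> // i; apply/Pl/mem_nth.
Qed.

Lemma ext_rseq0 : ext_rseq P 0. Proof. by exists [::]; rewrite big_nil. Qed.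
Lemma ext_lseq0 : ext_lseq P 0. Proof. by exists [::]; rewrite big_nil. Qed.

Lemma ext_rseqD x y : ext_rseq P x -> ext_rseq P y -> ext_rseq P (x + y).
Proof.
move=> [l1 [Pl1 ->]] [l2 [Pl2 ->]]; exists (l1 ++ l2); rewrite big_cat.
by split=> // p; rewrite mem_cat => /orP [] ?; [apply: Pl1 | apply: Pl2].
Qed.
Lemma ext_lseqD x y : ext_lseq P x -> ext_lseq P y -> ext_lseq P (x + y).
Proof.
move=> [l1 [Pl1 ->]] [l2 [Pl2 ->]]; exists (l1 ++ l2); rewrite big_cat.
by split=> // p; rewrite mem_cat => /orP [] ?; [apply: Pl1 | apply: Pl2].
Qed.

Lemma ext_rseqMr c x : ext_rseq P x -> ext_rseq P (x * c).
Proof.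
move=> [l [Pl ->]]; exists [seq (p.1, p.2 * c) | p <- l]; rewrite big_map mulr_suml.
split; last by apply: eq_bigr => p _; rewrite mulrA.
by move=> q /mapP [p lp ->]; exact: Pl lp.
Qed.
Lemma ext_lseqMl c x : ext_lseq P x -> ext_lseq P (c * x).
Proof.
move=> [l [Pl ->]]; exists [seq (p.1, c * p.2) | p <- l]; rewrite big_map mulr_sumr.
split; last by apply: eq_bigr => p _; rewrite mulrA.
by move=> q /mapP [p lp ->]; exact: Pl lp.
Qed.

Lemma ext_rseq_phi a : P a -> ext_rseq P (phi a).
Proof.
move=> Pa; exists [:: (a, 1)]; rewrite big_seq1 mulr1.
by split=> // p; rewrite inE => /eqP ->.
Qed.
Lemma ext_lseq_phi a : P a -> ext_lseq P (phi a).
Proof.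
move=> Pa; exists [:: (a, 1)]; rewrite big_seq1 mul1r.
by split=> // p; rewrite inE => /eqP ->.
Qed.

End ExtensionClosure.

Section ExtendedIdeal.
Variable I : A -> Prop.
Hypothesis hI : two_sided_ideal I.

(* c phi(z) = u^j phi(e z) = phi(z') u^m with z' in I *)
Lemma ext_rseq_Mphi c z : I z -> ext_rseq I (c * phi z).
Proof.
move=> Iz; have [e [j ->]] := fraction_left c.
have [z' [m [Iz' uz]]] := uX_phi_swap hI j (two_sided_idealMl hI e Iz).
by rewrite -mulrA -rmorphM uz; apply/ext_rseqMr/ext_rseq_phi.
Qed.

Lemma ext_lseq_phiM c z : I z -> ext_lseq I (phi z * c).
Proof.
move=> Iz; have [e [j ->]] := fraction_right c.
have [z' [m [Iz' zu]]] := phi_uX_swap hI j (two_sided_idealMr hI e Iz).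
by rewrite mulrA -rmorphM zu; apply/ext_lseqMl/ext_lseq_phi.
Qed.

Lemma ext_rseq_ideal : two_sided_ideal (ext_rseq I).
Proof.
split; [exact: ext_rseq0 | exact: ext_rseqD | | | exact: ext_rseqMr].
  move=> x [l [Il ->]]; exists [seq (p.1, - p.2) | p <- l]; rewrite big_map -sumrN.
  split; last by apply: eq_bigr => p _; rewrite mulrN.
  by move=> q /mapP [p lp ->]; exact: Il lp.
move=> c x [l [Il ->]]; rewrite mulr_sumr big_seq.
apply: big_ind => [||p lp]; [exact: ext_rseq0 | exact: ext_rseqD |].
by rewrite mulrA; apply/ext_rseqMr/ext_rseq_Mphi/Il.
Qed.

Lemma ext_lseq_ideal : two_sided_ideal (ext_lseq I).
Proof.
split; [exact: ext_lseq0 | exact: ext_lseqD | | exact: ext_lseqMl |].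
  move=> x [l [Il ->]]; exists [seq (p.1, - p.2) | p <- l]; rewrite big_map -sumrN.
  split; last by apply: eq_bigr => p _; rewrite mulNr.
  by move=> q /mapP [p lp ->]; exact: Il lp.
move=> c x [l [Il ->]]; rewrite mulr_suml big_seq.
apply: big_ind => [||p lp]; [exact: ext_lseq0 | exact: ext_lseqD |].
by rewrite -mulrA; apply/ext_lseqMl/ext_lseq_phiM/Il.
Qed.

Lemma ext_rseq_prod n c (F : 'I_n -> B) : (forall j, ext_rseq I (F j)) ->
  ext_rseq (prod_of I n) (c * \prod_(j < n) F j).
Proof.
elim: n c F => [|n IHn] c F IF.
  rewrite big_ord0 mulr1 -[c]mul1r -(rmorph1 phi); apply/ext_rseqMr/ext_rseq_phi.
  by exists (fun=> 0); rewrite big_ord0; split=> // _; exact: two_sided_ideal0 hI.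
rewrite big_ord_recl mulrA.
have [l [Il ->]] : ext_rseq I (c * F ord0).
  by apply: (two_sided_idealMl ext_rseq_ideal).
rewrite mulr_suml big_seq.
apply: big_ind => [||p lp]; [exact: ext_rseq0 | exact: ext_rseqD |].
have [l' [Il' e]] := IHn p.2 (fun i => F (lift ord0 i)) (fun i => IF _).
rewrite -mulrA e mulr_sumr; exists [seq (p.1 * q.1, q.2) | q <- l']; rewrite big_map.
split; last by apply: eq_bigr => q _; rewrite rmorphM mulrA.
by move=> _ /mapP [q lq ->]; apply/prod_ofM; [apply: Il | apply: Il'].
Qed.

Variable N : nat.
Hypothesis nilI : forall x, ideal_pow I N x -> x = 0.

Lemma ext_rseq_prod_eq0 c (F : 'I_N -> B) :
  (forall j, ext_rseq I (F j)) -> c * \prod_(j < N) F j = 0.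
Proof.
move=> /(ext_rseq_prod c) [l [Pl ->]]; rewrite big_seq big1 // => p /Pl.
by move=> /ideal_pow_prod_of /nilI ->; rewrite rmorph0 mul0r.
Qed.

Lemma ext_rseq_nilpotent x : ext_rseq I x -> x ^+ N = 0.
Proof.
move=> Ix; have := @ext_rseq_prod_eq0 1 (fun=> x) (fun=> Ix).
by rewrite mul1r prodr_const card_ord.
Qed.

Section Kernel.
Variables (Abar : pzRingType) (pi : {rmorphism A -> Abar}).
Hypotheses (pi_surj : forall y, exists a, pi a = y)
  (ker_pi : forall a, pi a = 0 <-> I a).
Variables (C : pzRingType) (psi : {rmorphism Abar -> C}).
Hypothesis hpsi : is_ring_of_fractions (powers (pi s)) psi.

(* B / J inverts s and kills I, so it receives a map from C. *)
Lemma quot_factor_fractions (J : B -> Prop) (hJ : two_sided_ideal J) :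
  (forall a, I a -> J (phi a)) ->
  exists h : {rmorphism C -> quot_ring hJ},
    forall a, h (psi (pi a)) = quot_proj hJ (phi a).
Proof.
move=> JI; pose q := quot_proj hJ \o phi.
have q_ker a : pi a = 0 -> q a = 0 by move=> /ker_pi /JI; rewrite /= quot_proj_eq0.
have [g g_pi] := factor_through_surjection pi_surj q_ker.
have [|h [h_psi _]] := proj2 hpsi _ g.
  move=> _ [j ->]; rewrite -rmorphXn g_pi.
  by apply/(invertible_rmorph (quot_proj hJ))/(proj1 hphi); exists j.
by exists h => a; rewrite h_psi g_pi.
Qed.

Lemma invertible_phi a : invertible (psi (pi a)) -> invertible (phi a).
Proof.
have [h h_psi] := quot_factor_fractions ext_rseq_ideal (ext_rseq_phi (P := I)).
move=> psi_inv; apply: (@invertible_lift _ _ (quot_proj ext_rseq_ideal)).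
- exact: quot_proj_surj.
- by move=> x /quot_proj_eq0 /ext_rseq_nilpotent; exists N.
suff : invertible (h (psi (pi a))) by rewrite h_psi.
exact: invertible_rmorph.
Qed.

Variable f : {rmorphism B -> C}.
Hypothesis f_phi : forall a, f (phi a) = psi (pi a).

Lemma ext_rseq_ker b : ext_rseq I b -> f b = 0.
Proof.
move=> [l [Il ->]]; rewrite rmorph_sum big_seq big1 // => p /Il /ker_pi pi_p.
by rewrite rmorphM f_phi pi_p rmorph0 mul0r.
Qed.

Lemma ext_lseq_ker b : ext_lseq I b -> f b = 0.
Proof.
move=> [l [Il ->]]; rewrite rmorph_sum big_seq big1 // => p /Il /ker_pi pi_p.
by rewrite rmorphM f_phi pi_p rmorph0 mulr0.
Qed.

Lemma ker_sub (J : B -> Prop) : two_sided_ideal J ->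
  (forall a, I a -> J (phi a)) -> forall b, f b = 0 -> J b.
Proof.
move=> hJ JI b fb; have [h h_psi] := quot_factor_fractions hJ JI.
have [h0 [_ h0_uniq]] := proj2 hphi _ (quot_proj hJ \o phi)
  (fun t st => invertible_rmorph (quot_proj hJ) (proj1 hphi t st)).
have hf : (h \o f) b = (quot_proj hJ) b.
  rewrite (h0_uniq (h \o f)) ?(h0_uniq (quot_proj hJ)) // => a /=.
  by rewrite f_phi.
by apply/(quot_proj_eq0 hJ); rewrite -hf /= fb rmorph0.
Qed.

Lemma ker_ext_rseq b : f b = 0 <-> ext_rseq I b.
Proof.
split; last exact: ext_rseq_ker.
by apply: (ker_sub ext_rseq_ideal); apply: ext_rseq_phi.
Qed.

Lemma ker_ext_lseq b : f b = 0 <-> ext_lseq I b.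
Proof.
split; last exact: ext_lseq_ker.
by apply: (ker_sub ext_lseq_ideal); apply: ext_lseq_phi.
Qed.

Lemma ker_nilpotent : ideal_nilpotent (fun b => f b = 0).
Proof.
exists N => _ [k [c [d [F [fF ->]]]]]; rewrite big1 // => i _.
by rewrite ext_rseq_prod_eq0 ?mul0r // => j; apply/ker_ext_rseq.
Qed.

End Kernel.
End ExtendedIdeal.
End FractionsLocallyNilpotentAd.

Theorem lemma1p12 (A : pzRingType) (I : A -> Prop) (s : A) :
  two_sided_ideal I -> ideal_nilpotent I -> gr_commutative I ->
  is_denominator_set (powers s) /\
  (forall (B : pzRingType) (phi : {rmorphism A -> B}),
     is_ring_of_fractions (powers s) phi ->
   forall (Abar : pzRingType) (pi : {rmorphism A -> Abar}),
     (forall y : Abar, exists a : A, pi a = y) ->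
     (forall a : A, pi a = 0 <-> I a) ->
   forall (C : pzRingType) (psi : {rmorphism Abar -> C}),
     is_ring_of_fractions (powers (pi s)) psi ->
     (forall f : {rmorphism B -> C}, (forall a : A, f (phi a) = psi (pi a)) ->
        [/\ (forall b : B, f b = 0 <-> ext_right I phi b),
            (forall b : B, f b = 0 <-> ext_left I phi b)
          & ideal_nilpotent (fun b : B => f b = 0)]) /\
     (forall a : A, invertible (phi a) <-> invertible (psi (pi a)))).
Proof.
move=> hI [N nilI] grI.
have adnil y : exists n, iter n (ad s) y = 0.
  by exists N; apply/nilI/ideal_pow_iter_ad.
split; first exact: powers_denominator_set.
move=> B phi hphi Abar pi pi_surj ker_pi C psi hpsi.
have [u [phisu uphis]] : invertible (phi s) by apply: (proj1 hphi); exists 1%N.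
split=> [f f_phi | a].
  split=> [b|b|]; rewrite ?ext_rightE ?ext_leftE.
  - exact: (ker_ext_rseq hphi adnil phisu uphis hI pi_surj ker_pi hpsi f_phi).
  - exact: (ker_ext_lseq hphi adnil phisu uphis hI pi_surj ker_pi hpsi f_phi).
  - exact: (ker_nilpotent hphi adnil phisu uphis hI nilI pi_surj ker_pi hpsi f_phi).
split; last exact: (invertible_phi hphi adnil phisu uphis hI nilI pi_surj ker_pi hpsi).
have psi_pi_inv t : powers s t -> invertible ((psi \o pi) t).
  by move=> [j ->]; rewrite /= rmorphXn; apply: (proj1 hpsi); exists j.
have [f [f_phi _]] := proj2 hphi _ _ psi_pi_inv.
by move=> /(invertible_rmorph f); rewrite f_phi.
Qed.
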